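(* Let $n$ be even and $f:\mathbb{F}_{2^n}\to\mathbb{F}_{2^n}$ be an APN map with $f(0)=0$ such that every $y\in\mathrm{Im}(f)\setminus\{0\}$ has at least 3 preimages. Then $f$ is almost-3-to-1.
   Context: $f$ is APN if for every $a\neq 0$ and every $b$ the equation $f(x+a)+f(x)=b$ has at most 2 solutions. $f$ is almost-3-to-1 if there is a unique element of $\mathrm{Im}(f)$ with exactly one preimage and every other element of $\mathrm{Im}(f)$ has exactly 3 preimages. *)

From HB Require Import structures.
From mathcomp Require Import all_boot all_order all_algebra all_field.
Set Implicit Arguments. Unset Strict Implicit. Unset Printing Implicit Defensive.
Import GRing.Theory.
Local Open Scope ring_scope.

Definition npre (F : finFieldType) (f : F -> F) (y : F) : nat :=
  #|[set x : F | f x == y]|.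

Definition APN (F : finFieldType) (f : F -> F) : Prop :=
  forall a b : F, a != 0 -> (#|[set x : F | (f (x + a) + f x == b)%R]| <= 2)%N.

Definition almost_3_to_1 (F : finFieldType) (f : F -> F) : Prop :=
  exists y0 : F, [/\ y0 \in codom f, npre f y0 = 1%N &
    forall y, y \in codom f -> y != y0 -> npre f y = 3%N].

(* The number of pairs (x, z) with f x = f z is
   sum_x npre f (f x); writing z = x + a it is also sum_a #{x | f (x+a) = f x}.
   The term a = 0 is q = #|F|, and for a <> 0, in characteristic 2, the set
   counted is the solution set of f(x+a) + f x = 0, of size at most 2 by the
   APN property; so the sum is at most 3q - 2.  Splitting the sum over the
   fiber of 0 (size m) and its complement (size L = q - m, fibers >= 3)
   forces m in {1, 2} and all other fibers of size exactly 3.  Hence 3 | L,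
   and since q = 2^n = 1 (mod 3) for n even, m = 1 (mod 3), so m = 1. *)

From mathcomp Require Import all_boot all_order all_algebra all_field zify.
Set Implicit Arguments. Unset Strict Implicit. Unset Printing Implicit Defensive.
Import GRing.Theory.

Lemma card_set_sum (T : finType) (P : pred T) :
  #|[set x | P x]| = \sum_x (P x : nat).
Proof. by rewrite -sum1dep_card big_mkcond. Qed.

Lemma sum_npre_translates (F : finFieldType) (f : F -> F) :
  \sum_x npre f (f x) = \sum_a #|[set x | f (x + a)%R == f x]|.
Proof.
have fiber x : npre f (f x) = \sum_a (f (x + a)%R == f x : nat).
  by rewrite /npre card_set_sum (reindex_inj (addrI x)).
rewrite (eq_bigr _ (fun x _ => fiber x)) exchange_big.
by apply: eq_bigr => a _; rewrite card_set_sum.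
Qed.

(* In characteristic 2, [f (x + a) = f x] iff [f (x + a) + f x = 0], so an
   APN map has at most two such [x] for each [a <> 0]; with [a = 0] this bounds
   the number of coincident pairs by [q + 2 (q - 1)]. *)
Lemma sum_npre_APN_le (F : finFieldType) (f : F -> F) :
  (2 \in [pchar F])%R -> APN f -> \sum_x npre f (f x) <= #|F| + #|F|.-1 * 2.
Proof.
move=> ch2 hAPN; rewrite sum_npre_translates (bigD1 0%R) //= leq_add //.
  exact: max_card.
rewrite -(cardC1 0%R) -sum_nat_const.
apply: leq_sum => a a0.
have -> : [set x | f (x + a)%R == f x] = [set x | (f (x + a) + f x == 0)%R].
  by apply/setP => x; rewrite !inE addr_eq0 oppr_pchar2.
exact: hAPN.
Qed.

Lemma npre_add_card_other (F : finFieldType) (f : F -> F) (y0 : F) :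
  npre f y0 + #|[set x | f x != y0]| = #|F|.
Proof.
rewrite /npre -(cardsC [set x | f x == y0]); congr (_ + _).
by apply: eq_card => x; rewrite !inE.
Qed.

Lemma sum_npre_split (F : finFieldType) (f : F -> F) (y0 : F) :
  \sum_x npre f (f x) = npre f y0 ^ 2 + \sum_(x | f x != y0) npre f (f x).
Proof.
rewrite (bigID (fun x => f x == y0)) /=; congr (_ + _).
rewrite (eq_bigr (fun=> npre f y0)) => [|x /eqP -> //].
by rewrite sum_nat_cond_const.
Qed.

Lemma eq_of_sum_le (T : finType) (P : pred T) (g : T -> nat) (k : nat) :
  (forall i, P i -> k <= g i) -> \sum_(i | P i) g i <= #|[set i | P i]| * k ->
  forall i, P i -> g i = k.
Proof.
move=> g_ge sum_le i Pi; apply/eqP; rewrite eqn_leq g_ge // andbT.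
have no_excess : \sum_(j | P j) (g j - k) == 0.
  by rewrite sumnB // sum_nat_cond_const subn_eq0.
by move: no_excess; rewrite sum_nat_eq0 -subn_eq0 => /forall_inP->.
Qed.

(* If all image values other than [y0] have [k] preimages, then [k] divides
   the number of points outside the fiber of [y0], a disjoint union of such
   fibers. *)
Lemma dvdn_card_regular_fibers (F : finFieldType) (f : F -> F) (y0 : F) (k : nat) :
  (forall y, y \in codom f -> y != y0 -> npre f y = k) ->
  k %| #|[set x | f x != y0]|.
Proof.
move=> fib; rewrite -sum1dep_card (partition_big f (fun y => y != y0)) //=.
apply: dvdn_sum => y yy0; rewrite sum1dep_card.
have -> : [set x | (f x != y0) && (f x == y)] = [set x | f x == y].
  by apply/setP => x; rewrite !inE; case: (f x =P y) => [->|_]; rewrite ?yy0 ?andbF.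
have [/codomP [x fx] | y_out] := boolP (y \in codom f).
  by subst y; move: (fib _ (codom_f f x) yy0); rewrite /npre => ->.
rewrite (_ : [set x | f x == y] = set0) ?cards0 ?dvdn0 //.
by apply/setP => x; rewrite !inE; apply: contraNF y_out => /eqP <-; exact: codom_f.
Qed.

(* [2^(2k) = 4^k = 1 (mod 3)]. *)
Lemma expn2_even_mod3 (n : nat) : ~~ odd n -> 2 ^ n = 1 %[mod 3].
Proof.
move=> n_even; rewrite -[n]odd_double_half (negbTE n_even) add0n -muln2 mulnC.
by rewrite expnM -modnXm /= exp1n.
Qed.

Lemma npre_codom_gt0 (F : finFieldType) (f : F -> F) (y : F) :
  y \in codom f -> 0 < npre f y.
Proof. by case/codomP=> x ->; rewrite card_gt0; apply/set0Pn; exists x; rewrite inE. Qed.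

(* With
   [m = npre f y0] and [L] the number of points outside that fiber, the fiber
   sizes sum to [m^2 + K] with [3 L <= K], while [q = m + L] and the APN bound
   give [m^2 + K <= 3 q - 2]; hence [(m - 1)(m - 2) <= 0] and [K <= 3 L]. *)
Lemma APN_fiber_sizes (F : finFieldType) (f : F -> F) (y0 : F) :
  (2 \in [pchar F])%R -> APN f -> y0 \in codom f ->
  (forall y, y \in codom f -> y != y0 -> 3 <= npre f y) ->
  0 < npre f y0 <= 2 /\ forall y, y \in codom f -> y != y0 -> npre f y = 3.
Proof.
move=> ch2 hAPN y0_im ge3.
set m := npre f y0; set L := #|[set x | f x != y0]|.
set K := \sum_(x | f x != y0) npre f (f x).
have card_split : m + L = #|F| := npre_add_card_other f y0.
have K_ge : L * 3 <= K.
  by rewrite -sum_nat_cond_const; apply: leq_sum => x fx; apply: ge3; rewrite ?codom_f.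
have K_le : m ^ 2 + K <= #|F| + #|F|.-1 * 2.
  by rewrite -sum_npre_split sum_npre_APN_le.
have m_pos : 0 < m by apply: npre_codom_gt0.
have quadratic : 3 * m <= m ^ 2 + 2 by case: (m) => [|[|k]] //; nia.
split; first by apply/andP; split; nia.
move=> _ /codomP [x ->] fx.
apply: (@eq_of_sum_le _ (fun x => f x != y0) (fun x => npre f (f x))) => //.
  by move=> z fz; apply: ge3; rewrite ?codom_f.
by rewrite -/K -/L; nia.
Qed.

Local Open Scope ring_scope.

(* Proposition 4.7.  The core lemma leaves [npre f 0] in [{1, 2}] and makes
   all nonzero fibers of size 3, so [3] divides the number of points outside
   [f^-1(0)]; as [2^n = 1 (mod 3)] for even [n], [npre f 0 = 1 (mod 3)]. *)
Theorem proposition4p7 (F : finFieldType) (n : nat) (f : F -> F) :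
  #|F| = (2 ^ n)%N -> ~~ odd n ->
  APN f -> f 0 = 0 ->
  (forall y, y \in codom f -> y != 0 -> (3 <= npre f y)%N) ->
  almost_3_to_1 f.
Proof.
move=> card_F n_even hAPN f0 ge3.
have zero_im : 0 \in codom f by rewrite -f0 codom_f.
have [/andP [zero_fiber_pos zero_fiber_le2] fibers3] :=
  APN_fiber_sizes (card_finPcharP card_F isT) hAPN zero_im ge3.
have /dvdnP [k card_nonzero] := dvdn_card_regular_fibers fibers3.
have zero_fiber1 : npre f 0 = 1%N.
  have := expn2_even_mod3 n_even.
  by rewrite -card_F -(npre_add_card_other f 0) card_nonzero; lia.
by exists 0; split.
Qed.
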